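(* Let $\rho_{AB}$ be positive semidefinite on $\mathcal{H}_A\otimes\mathcal{H}_B$ with $0<\operatorname{tr}\rho_{AB}\le1$, and let $\sigma_B$ be a normalized density operator on $\mathcal{H}_B$. Then $$D_{\max}(\rho_{AB}\|\mathbb{1}_A\otimes\sigma_B)\ge\log\Gamma_C(\rho_{AB}|\sigma_B)-\log\operatorname{tr}\rho_{AB}.$$
   Context: Hilbert spaces are finite-dimensional; $\log$ is binary; inverses are generalized inverses (on the support). $D_{\max}(\rho\|\tau)=\inf\{\lambda\in\mathbb{R}:\rho\le2^\lambda\tau\}$. $\Gamma_C(\rho_{AB}|\sigma_B):=\operatorname{tr}\big((\rho_{AB}(\mathbb{1}_A\otimes\sigma_B^{-1/2}))^2\big)$. *)

(* Finite-dimensional Hilbert spaces H_A = C^dA, H_B = C^dB, with C = R[i]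
   the complex numbers over an arbitrary real field R : realType.
   Operators on H_A (x) H_B are 'M[R[i]]_(dA * dB) (Kronecker product). *)
From HB Require Import structures.
From mathcomp Require Import all_boot all_order all_algebra.
From mathcomp Require Import all_classical all_reals all_analysis.
From mathcomp Require Import complex.
Set Implicit Arguments. Unset Strict Implicit. Unset Printing Implicit Defensive.
Import Order.TTheory GRing.Theory Num.Theory.
Local Open Scope ring_scope.
Local Open Scope sesquilinear_scope.

Section QDefs.
Variable R : realType.
Local Notation C := (R[i]).

Definition psdmx n (A : 'M[C]_n) : Prop :=
  A \is hermsymmx /\ forall v : 'rV[C]_n, 0 <= (v *m A *m v ^t*) 0 0.

Definition loewner n (A B : 'M[C]_n) : Prop := psdmx (B - A).

(* Kronecker (tensor) product; index k of 'I_(m1*m2) corresponds to the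
   pair (k1,k2) via mxvec's enumeration of 'I_m1 * 'I_m2. *)
Definition tensmx m1 n1 m2 n2 (A : 'M[C]_(m1, n1)) (B : 'M[C]_(m2, n2))
  : 'M[C]_(m1 * m2, n1 * n2) :=
  \matrix_(k < m1 * m2, l < n1 * n2)
    (let ki := enum_val (cast_ord (esym (mxvec_cast m1 m2)) k) in
     let lj := enum_val (cast_ord (esym (mxvec_cast n1 n2)) l) in
     A ki.1 lj.1 * B ki.2 lj.2).

(* Generalized inverse square root sigma^{-1/2} (inverse on the support),
   via the spectral decomposition sigma = P^-1 diag(d) P of a Hermitian
   matrix; eigenvalue x |-> (sqrt x)^-1 for x > 0 and 0 for x = 0
   (note 0^-1 = 0 in MathComp). *)
Definition inv_sqrtmx n (S : 'M[C]_n) : 'M[C]_n :=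
  invmx (spectralmx S) *m diag_mx (map_mx (fun x => (sqrtC x)^-1) (spectral_diag S))
    *m spectralmx S.

Definition GammaC dA dB (rho : 'M[C]_(dA * dB)) (sigma : 'M[C]_dB) : C :=
  let X := rho *m tensmx (1%:M : 'M[C]_dA) (inv_sqrtmx sigma) in \tr (X *m X).

Definition log2 (x : R) : R := ln x / ln 2.

Definition elog2 (x : R) : \bar R := if 0 < x then (log2 x)%:E else -oo%E.

Definition Dmax n (rho tau : 'M[C]_n) : \bar R :=
  ereal_inf [set l%:E | l in [set l : R | loewner rho (real_complex R ((2 : R) `^ l) *: tau)]].

End QDefs.

From HB Require Import structures.
From mathcomp Require Import all_boot all_order all_algebra.
From mathcomp Require Import all_classical all_reals all_analysis.
From mathcomp Require Import complex.
Import Order.TTheory GRing.Theory Num.Theory.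
Local Open Scope ring_scope.

Set Implicit Arguments. Unset Strict Implicit. Unset Printing Implicit Defensive.
Local Open Scope sesquilinear_scope.

(** If [rho <= c (1 (x) sigma)], conjugate by the Hermitian matrix
    [T = 1 (x) sigma^{-1/2}]: [T rho T <= c T (1 (x) sigma) T <= c], because
    [sigma^{-1/2} sigma sigma^{-1/2}] is the projector onto the support of
    [sigma].  Since [tr (rho Y) >= 0] for [Y >= 0], this gives
    [Gamma_C = tr (rho (T rho T)) <= c tr (rho T (1 (x) sigma) T) <= c tr rho],
    and taking binary logarithms over all admissible [c = 2^lambda] bounds
    [D_max] from below.  Identifying [H_A (x) H_B] with [dA x dB] matrices
    through [mxvec], [1 (x) X] is right multiplication by [X] ([lin_mulmxr]),
    so the tensor factor needs no separate theory. *)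

Section LinMulmxr.
Variable R : pzRingType.

Lemma lin_mulmxrE m n p (X : 'M[R]_(n, p)) i j k l :
  lin_mulmxr X (mxvec_index i j) (mxvec_index k l : 'I_(m * p))
  = (i == k)%:R * X j l.
Proof.
rewrite /lin_mulmxr /lin_mx mxE /= vec_mx_delta mxvecE mxE.
rewrite (bigD1 j) //= big1 ?addr0 => [|t /negbTE ntj]; rewrite !mxE ?ntj.
  by rewrite eqxx andbT eq_sym.
by rewrite andbF mul0r.
Qed.

Lemma lin_mulmxrM m n p q (X : 'M[R]_(n, p)) (Y : 'M[R]_(p, q)) :
  lin_mulmxr (X *m Y) = lin_mulmxr X *m lin_mulmxr Y :> 'M[R]_(m * n, m * q).
Proof.
by apply/row_matrixP => k; rewrite !rowE mulmxA !mul_rV_lin /= mxvecK mulmxA.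
Qed.

Lemma lin_mulmxr1 m n : lin_mulmxr (1%:M : 'M[R]_n) = 1%:M :> 'M[R]_(m * n).
Proof.
by apply/row_matrixP => k; rewrite !rowE mul_rV_lin /= mulmx1 vec_mxK mulmx1.
Qed.

End LinMulmxr.

Section ComplexMatrix.
Variable C : numClosedFieldType.

Lemma lin_mulmxr_trmxC m n p (X : 'M[C]_(n, p)) :
  (lin_mulmxr X)^t* = lin_mulmxr (X^t*) :> 'M[C]_(m * p, m * n).
Proof.
apply/matrixP => k l; case/mxvec_indexP: k => i j; case/mxvec_indexP: l => i' j'.
by rewrite [LHS]mxE [in LHS]mxE !lin_mulmxrE mxE rmorphM rmorph_nat mxE eq_sym.
Qed.

Lemma mul_mxvec_trmxC m n (A B : 'M[C]_(m, n)) :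
  (mxvec A *m (mxvec B)^t*) 0 0 = \sum_i (row i A *m (row i B)^t*) 0 0.
Proof.
rewrite mxE (reindex _ (curry_mxvec_bij _ _)) /=.
under [RHS]eq_bigr do rewrite mxE.
rewrite pair_bigA /=; apply: eq_bigr => -[i j] _ /=.
by rewrite !mxE !mxvecE.
Qed.

Definition nnform n (K : 'M[C]_n) :=
  forall v : 'rV[C]_n, 0 <= (v *m K *m v ^t*) 0 0.

Lemma nnform_lin_mulmxr m n (X : 'M[C]_n) :
  nnform X -> nnform (lin_mulmxr X : 'M[C]_(m * n)).
Proof.
move=> HX v; rewrite -[v]vec_mxK mul_vec_lin /= mul_mxvec_trmxC.
by apply: sumr_ge0 => i _; rewrite row_mul; exact: HX.
Qed.

Lemma nnform_diag_ge0 n (K : 'M[C]_n) j : nnform K -> 0 <= K j j.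
Proof.
move=> /(_ (delta_mx 0 j)).
by rewrite -rowE trmx_delta map_delta_mx -colE !mxE.
Qed.

Lemma nnform_conj m n (K : 'M[C]_m) (U : 'M[C]_(m, n)) :
  nnform K -> nnform (U ^t* *m K *m U).
Proof.
by move=> HK v; have := HK (v *m U ^t*); rewrite trmx_mul map_mxM trmxCK !mulmxA.
Qed.

Lemma nnform_diag n (d : 'rV[C]_n) : (forall j, 0 <= d 0 j) -> nnform (diag_mx d).
Proof.
move=> d_ge0 v; rewrite mul_mx_diag !mxE; apply: sumr_ge0 => k _.
by rewrite !mxE mulrAC mulr_ge0 // mul_conjC_ge0.
Qed.

Lemma hermitian_spectralE n (A : 'M[C]_n) : A \is hermsymmx ->
  A = (spectralmx A)^t* *m diag_mx (spectral_diag A) *m spectralmx A.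
Proof.
move=> /hermitian_normalmx /orthomx_spectralP {1}->.
by rewrite invmx_unitary // spectral_unitarymx.
Qed.

End ComplexMatrix.

Section Quantum.
Variable R : realType.
Local Notation C := R[i].

Lemma tensmx1 m n (X : 'M[C]_n) :
  tensmx (1%:M : 'M[C]_m) X = lin_mulmxr X.
Proof.
apply/matrixP => k l; case/mxvec_indexP: k => i j; case/mxvec_indexP: l => i' j'.
by rewrite lin_mulmxrE mxE /= /mxvec_index !cast_ordK !enum_rankK mxE.
Qed.

Lemma psdmx_spectral_diag_ge0 n (A : 'M[C]_n) j :
  psdmx A -> 0 <= spectral_diag A 0 j.
Proof.
move=> [A_herm A_nn]; have E := hermitian_spectralE A_herm.
have PU := spectral_unitarymx A.
set P := spectralmx A in E PU *; set d := spectral_diag A in E *.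
have := nnform_diag_ge0 j (nnform_conj (P^t*) A_nn).
by rewrite trmxCK {1}E !mulmxA mulmxtVK // (unitarymxP PU) mul1mx mxE eqxx mulr1n.
Qed.

Lemma psdmx_mxtrace_mul_ge0 n (A Y : 'M[C]_n) :
  psdmx A -> nnform Y -> 0 <= \tr (A *m Y).
Proof.
move=> A_psd Y_nn; have E := hermitian_spectralE A_psd.1.
set P := spectralmx A in E *; set d := spectral_diag A in E *.
rewrite E -!mulmxA mxtrace_mulC -!mulmxA mul_diag_mx.
apply: sumr_ge0 => j _; rewrite mxE mulr_ge0 ?psdmx_spectral_diag_ge0 //.
by have := nnform_diag_ge0 j (nnform_conj (P^t*) Y_nn); rewrite trmxCK !mulmxA.
Qed.

(* As [0^-1 = 0], the left-hand side is [1] on the support of [x], else [0]. *)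
Lemma invsqrtC_mul_le1 (x : C) : (sqrtC x)^-1 * x * (sqrtC x)^-1 <= 1.
Proof.
rewrite -{2}(sqrtCK x); have [->|r_neq0] := eqVneq (sqrtC x) 0.
  by rewrite invr0 !mul0r ler01.
by rewrite expr2 mulrA mulVf // mul1r divff.
Qed.

Section InvSqrtmx.
Variables (n : nat) (S : 'M[C]_n).
Hypothesis S_psd : psdmx S.
Let P := spectralmx S.
Let d := spectral_diag S.
Let s : 'rV[C]_n := map_mx (fun x => (sqrtC x)^-1) d.
Let P_unitary : P \is unitarymx. Proof. exact: spectral_unitarymx. Qed.

Lemma inv_sqrtmxE : inv_sqrtmx S = P^t* *m diag_mx s *m P.
Proof. by rewrite /inv_sqrtmx invmx_unitary. Qed.

Lemma inv_sqrtmx_trmxC : (inv_sqrtmx S)^t* = inv_sqrtmx S.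
Proof.
rewrite inv_sqrtmxE !trmx_mul !map_mxM trmxCK tr_diag_mx map_diag_mx mulmxA.
congr (_ *m diag_mx _ *m _); apply/matrixP => i j; rewrite !mxE (ord1 i).
by apply: geC0_conj; rewrite invr_ge0 sqrtC_ge0 psdmx_spectral_diag_ge0.
Qed.

Lemma nnform_1_sub_inv_sqrtmx_conj :
  nnform (1%:M - inv_sqrtmx S *m S *m inv_sqrtmx S).
Proof.
have PtP : P^t* *m P = 1%:M by rewrite -[P^t*]mul1mx mulmxKtV.
have conjM X Y : (P^t* *m X *m P) *m (P^t* *m Y *m P) = P^t* *m (X *m Y) *m P.
  by rewrite !mulmxA mulmxtVK.
have conjB X : 1%:M - P^t* *m X *m P = P^t* *m (1%:M - X) *m P.
  by rewrite mulmxBr mulmxBl mulmx1 PtP.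
rewrite inv_sqrtmxE (hermitian_spectralE S_psd.1) -/P -/d !conjM !mulmx_diag.
rewrite conjB -diag_const_mx -linearB /=; apply/nnform_conj/nnform_diag => j.
by rewrite !mxE subr_ge0 invsqrtC_mul_le1.
Qed.
End InvSqrtmx.

Lemma GammaC_le_scale_mxtrace dA dB (rho : 'M[C]_(dA * dB)) (sigma : 'M[C]_dB)
    (c : C) :
  psdmx rho -> psdmx sigma -> 0 <= c ->
  loewner rho (c *: tensmx (1%:M : 'M[C]_dA) sigma) ->
  GammaC rho sigma <= c * \tr rho.
Proof.
move=> rho_psd sigma_psd c_ge0; rewrite /GammaC !tensmx1 => -[_ rho_le].
set S := inv_sqrtmx sigma; set T := lin_mulmxr S : 'M[C]_(dA * dB).
have T_herm : T^t* = T by rewrite lin_mulmxr_trmxC inv_sqrtmx_trmxC.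
have TsigmaT : T *m lin_mulmxr sigma *m T = lin_mulmxr (S *m sigma *m S).
  by rewrite /T !lin_mulmxrM.
have le_sigma : \tr (rho *m (T *m rho *m T))
                <= c * \tr (rho *m (T *m lin_mulmxr sigma *m T)).
  have := psdmx_mxtrace_mul_ge0 rho_psd (nnform_conj T rho_le).
  rewrite T_herm mulmxBr mulmxBl -scalemxAr -scalemxAl mulmxBr -scalemxAr.
  by rewrite linearB linearZ /= subr_ge0.
have le_one : \tr (rho *m (T *m lin_mulmxr sigma *m T)) <= \tr rho.
  have := nnform_lin_mulmxr (m := dA) (nnform_1_sub_inv_sqrtmx_conj sigma_psd).
  rewrite linearB /= lin_mulmxr1 -TsigmaT => /(psdmx_mxtrace_mul_ge0 rho_psd).
  by rewrite mulmxBr mulmx1 linearB subr_ge0.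
have -> : rho *m T *m (rho *m T) = rho *m (T *m rho *m T) by rewrite !mulmxA.
exact: le_trans le_sigma (ler_wpM2l c_ge0 le_one).
Qed.

Lemma ReM_real_complex (x : R) (z : C) :
  complex.Re (real_complex R x * z) = x * complex.Re z.
Proof. by case: z => a b /=; rewrite mul0r subr0. Qed.

Lemma elog2_sub_le_powR (g t l : R) :
  0 < t -> g <= 2 `^ l * t -> (elog2 g - elog2 t <= l%:E)%E.
Proof.
move=> t_gt0 g_le; rewrite [elog2 t]/elog2 t_gt0 /elog2.
case: ifPn => g_gt0; last by rewrite /= leNye.
rewrite -EFinD lee_fin /log2 -mulrBl ler_pdivrMr ?ln_gt0 ?ltr1n //.
rewrite lerBlDr -ln_powR -lnM ?posrE ?powR_gt0 //.
by rewrite ler_ln ?posrE ?mulr_gt0 ?powR_gt0.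
Qed.

End Quantum.

Theorem lemma15 (R : realType) (dA dB : nat)
  (rho : 'M[R[i]]_(dA * dB)) (sigma : 'M[R[i]]_dB) :
  psdmx rho -> 0 < \tr rho -> \tr rho <= 1 ->
  psdmx sigma -> \tr sigma = 1 ->
  (Dmax rho (tensmx (1%:M : 'M[R[i]]_dA) sigma)
     >= elog2 (complex.Re (GammaC rho sigma)) - elog2 (complex.Re (\tr rho)))%E.
Proof.
move=> rho_psd; rewrite ltcE => /andP[_ tr_gt0] _ sigma_psd _.
apply/ereal_infP => _ [l rho_le <-].
have c_ge0 : 0 <= real_complex R (2 `^ l) by rewrite lecE /= eqxx powR_ge0.
have := GammaC_le_scale_mxtrace rho_psd sigma_psd c_ge0 rho_le.
by rewrite lecE => /andP[_]; rewrite ReM_real_complex; exact: elog2_sub_le_powR.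
Qed.
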